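(* Let $(G,c)$ be an edge-colored DAG in which all edges have the same color, and suppose $G$ has at least two edges. If $(H,c')$ is any edge-colored DAG on the same vertex set in which all edges have the same color and $\mathcal M(H,c')=\mathcal M(G,c)$, then $H=G$.
   Context: An edge-colored DAG $(G,c)$, $G=(V,E)$, has a coloring of $V\sqcup E$ in which every vertex forms its own color class (edge colors distinct from vertex colors). $\mathcal M(G,c)$ is the set of $(I-\Lambda)^{-T}\Omega(I-\Lambda)^{-1}$ with $\Omega=\mathrm{diag}(\omega_i)$, $\omega_i>0$ arbitrary, $\lambda_{ij}=0$ for $ij\notin E$, and $\lambda_{ij}=\lambda_{kl}$ whenever $c(ij)=c(kl)$; with a single edge color this means all $\lambda_{ij}$, $ij\in E$, equal a common real number. *)

From mathcomp Require Import all_boot all_order all_algebra.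
From mathcomp Require Import reals.
Set Implicit Arguments. Unset Strict Implicit. Unset Printing Implicit Defensive.
Import GRing.Theory Num.Theory.
Local Open Scope ring_scope.

(* A directed graph on vertex set 'I_n is given by its edge set E; the pair
   (i, j) \in E denotes the edge i -> j. *)
Definition edge_rel (n : nat) (E : {set 'I_n * 'I_n}) : rel 'I_n :=
  fun i j => (i, j) \in E.

Definition is_dag (n : nat) (E : {set 'I_n * 'I_n}) : Prop :=
  forall i j : 'I_n, (i, j) \in E -> ~~ connect (edge_rel E) j i.

Definition Lambda_one (R : realType) (n : nat) (E : {set 'I_n * 'I_n}) (lam : R)
  : 'M[R]_n := \matrix_(i, j) (if (i, j) \in E then lam else 0).

Definition cov_of (R : realType) (n : nat) (L : 'M[R]_n) (w : 'rV[R]_n)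
  : 'M[R]_n :=
  (invmx (1%:M - L))^T *m diag_mx w *m invmx (1%:M - L).

(* The model M(G,c) of a DAG with a single edge color (and each vertex its own
   color): all edges share a common real lambda, omega_i > 0 arbitrary. *)
Definition model_one_color (R : realType) (n : nat) (E : {set 'I_n * 'I_n})
  (S : 'M[R]_n) : Prop :=
  exists (w : 'rV[R]_n) (lam : R),
    (forall i, 0 < w 0 i) /\ S = cov_of (Lambda_one E lam) w.

From mathcomp Require Import all_boot all_order all_algebra.
From mathcomp Require Import reals.
From mathcomp Require Import ring lra.
Set Implicit Arguments. Unset Strict Implicit. Unset Printing Implicit Defensive.
Import Order.TTheory GRing.Theory Num.Theory.
Local Open Scope ring_scope.

(* Pass to precision matrices K = (I - lam A) D (I - lam A)^T, with A the
   adjacency matrix and D = Omega^-1; their entries are polynomials in lam.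
   Given an edge i -> j and a second edge k -> l of G, take the point of M(G)
   with lam = t tiny and D = diag(1 at i, 2 at j, 3 elsewhere).  If (H, mu, D')
   yields the same K, the column of K at a sink of H forces mu = O(t), and the
   diagonal forces D' = D + O(t^2).  Comparing the O(t) parts of off-diagonal
   entries, an edge i -> j missing from H must be reversed in H, which forces
   mu ~ 2 t; entry (k, l) then forces d_l ~ 2 (a'_kl d_l + a'_lk d_k), which
   these weights rule out.  Hence G is contained in H, and by symmetry H = G. *)

Section DagRank.
Variables (n : nat) (E : {set 'I_n * 'I_n}).
Hypothesis dagE : is_dag E.

Definition desc_card (x : 'I_n) : nat := #|[set y | connect (edge_rel E) x y]|.

Lemma desc_card_gt0 x : (0 < desc_card x)%N.
Proof. by apply/card_gt0P; exists x; rewrite inE connect0. Qed.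

Lemma desc_card_le x : (desc_card x <= n)%N.
Proof. by rewrite -[n]card_ord max_card. Qed.

Lemma desc_card_edge x y : (x, y) \in E -> (desc_card y < desc_card x)%N.
Proof.
move=> xy; apply/proper_card/properP; split.
  by apply/subsetP => z; rewrite !inE; apply: connect_trans; apply: connect1.
by exists x; rewrite inE ?connect0 // dagE.
Qed.

Lemma dag_irrefl x : (x, x) \notin E.
Proof. by apply/negP => xx; have := dagE xx; rewrite connect0. Qed.

Lemma dag_asym x y : (x, y) \in E -> (y, x) \notin E.
Proof. by move=> xy; apply/negP => yx; have := dagE xy; rewrite connect1. Qed.

Lemma dag_edge_into_sink e : e \in E ->
  exists p b, (p, b) \in E /\ forall c, (b, c) \notin E.
Proof.
move=> eE; case: (arg_minnP (fun e : 'I_n * 'I_n => desc_card e.2) eE).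
move=> [p b] pb pb_min; exists p, b; split=> // c; apply/negP => bc.
by have := leq_trans (desc_card_edge bc) (pb_min _ bc); rewrite ltnn.
Qed.

Lemma dag_unitmx (R : fieldType) (L : 'M[R]_n) :
  (forall i j, (i, j) \notin E -> L i j = 0) -> 1%:M - L \in unitmx.
Proof.
move=> L0; rewrite unitmxE unitfE; apply/negP => /det0P [v v_neq0 vL].
suff v0 m y : (n < desc_card y + m)%N -> v 0 y = 0.
  apply/negP: v_neq0; rewrite negbK; apply/eqP/matrixP => i y.
  by rewrite ord1 mxE (v0 n) // -{1}[n]add0n ltn_add2r desc_card_gt0.
elim: m y => [|m IHm] y; first by rewrite addn0 ltnNge desc_card_le.
rewrite addnS ltnS => ltny.
have /eqP : (v *m (1%:M - L)) 0 y = 0 by rewrite vL mxE.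
rewrite mulmxBr mulmx1 !mxE subr_eq0 => /eqP ->.
apply: big1 => x _; case: (boolP ((x, y) \in E)) => [xy|/L0 ->]; last by rewrite mulr0.
by rewrite IHm ?mul0r // (leq_ltn_trans ltny) // ltn_add2r desc_card_edge.
Qed.

End DagRank.

Lemma bool_mul_bnd (R : numDomainType) (b : bool) (x : R) :
  0 <= x -> 0 <= b%:R * x <= x.
Proof. by case: b => x_ge0; rewrite ?mul1r ?mul0r x_ge0 ?lexx. Qed.

Lemma norm_bool_mul (R : numDomainType) (b : bool) (x : R) : `|b%:R * x| <= `|x|.
Proof. by case: b; rewrite ?mul1r ?mul0r ?normr0. Qed.

Section Precision.
Variables (R : realType) (n : nat).
Implicit Types (E : {set 'I_n * 'I_n}) (d : 'I_n -> R) (lam : R) (x y : 'I_n).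

Definition prec_mx (L : 'M[R]_n) (d : 'rV[R]_n) : 'M[R]_n :=
  (1%:M - L) *m diag_mx d *m (1%:M - L)^T.

Lemma cov_ofK (L : 'M[R]_n) (w : 'rV[R]_n) :
  1%:M - L \in unitmx -> (forall i, w 0 i != 0) ->
  cov_of L w *m prec_mx L (map_mx GRing.inv w) = 1%:M.
Proof.
move=> PU w_neq0; rewrite /cov_of /prec_mx.
have diagK : diag_mx w *m diag_mx (map_mx GRing.inv w) = 1%:M.
  apply/matrixP => i j; rewrite mul_diag_mx !mxE; case: eqP => [->|_]; last by rewrite mulr0.
  by rewrite /= !mulr1n divff.
rewrite !mulmxA -(mulmxA _ (invmx _)) mulVmx // mulmx1 -(mulmxA _ (diag_mx w)) diagK.
by rewrite mulmx1 -trmx_mul mulmxV // trmx1.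
Qed.

Lemma prec_mx_cov_of_eq (L L' : 'M[R]_n) (w w' : 'rV[R]_n) :
  1%:M - L \in unitmx -> (forall i, w 0 i != 0) ->
  1%:M - L' \in unitmx -> (forall i, w' 0 i != 0) ->
  cov_of L w = cov_of L' w' ->
  prec_mx L (map_mx GRing.inv w) = prec_mx L' (map_mx GRing.inv w').
Proof.
move=> PU w_neq0 PU' w'_neq0 eq_cov.
have K' := mulmx1C (cov_ofK PU' w'_neq0); have := cov_ofK PU w_neq0.
by rewrite eq_cov => K; rewrite -[LHS]mul1mx -K' -mulmxA K mulmx1.
Qed.

Definition adj E x y : R := ((x, y) \in E)%:R.

Definition child_sum E d x y : R :=
  \sum_k adj E x k * adj E y k * d k.

Definition prec_entry E d lam x y : R :=
  (x == y)%:R * d x - lam * (adj E x y * d y + adj E y x * d x)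
  + lam ^+ 2 * child_sum E d x y.

Lemma prec_mxE E lam (d : 'rV[R]_n) x y :
  prec_mx (Lambda_one E lam) d x y = prec_entry E (d 0) lam x y.
Proof.
have sum_delta (F : 'I_n -> R) i : \sum_k (i == k)%:R * F k = F i.
  rewrite (bigD1 i) //= eqxx mul1r big1 ?addr0 // => k; rewrite eq_sym.
  by move=> /negbTE ->; rewrite mul0r.
rewrite /prec_mx /prec_entry /child_sum mxE.
transitivity (\sum_k ((x == k)%:R * ((y == k)%:R * d 0 k)
    - lam * ((x == k)%:R * (adj E y k * d 0 k))
    - lam * ((y == k)%:R * (adj E x k * d 0 k))
    + lam ^+ 2 * (adj E x k * adj E y k * d 0 k))).
  apply: eq_bigr => k _; rewrite mul_mx_diag !mxE /adj.
  by case: (x == k); case: (y == k); case: (_ \in E); case: (_ \in E); rewrite /=; ring.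
rewrite !big_split /= !sumrN -!mulr_sumr !sum_delta [y == x]eq_sym.
by case: (x =P y) => [->|_] /=; ring.
Qed.

Lemma prec_entry_diag E d lam x : (x, x) \notin E ->
  prec_entry E d lam x x = d x + lam ^+ 2 * child_sum E d x x.
Proof.
by move=> xx; rewrite /prec_entry /adj eqxx (negbTE xx) !mul0r addr0 mulr0 subr0 mul1r.
Qed.

Lemma prec_entry_offdiag E d lam x y : x != y ->
  prec_entry E d lam x y =
    lam ^+ 2 * child_sum E d x y - lam * (adj E x y * d y + adj E y x * d x).
Proof. by move=> /negbTE xy; rewrite /prec_entry xy mul0r sub0r addrC. Qed.

Lemma child_sum_sink E d x y :
  (forall c, (y, c) \notin E) -> child_sum E d x y = 0.
Proof.
by move=> y_sink; apply: big1 => k _; rewrite /adj (negbTE (y_sink k)) mulr0 mul0r.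
Qed.

Lemma child_sum_ge0 E d x y :
  (forall k, 0 <= d k) -> 0 <= child_sum E d x y.
Proof.
move=> d_ge0; apply: sumr_ge0 => k _; rewrite /adj -natrM mulnb.
by case/andP: (bool_mul_bnd (((x, k) \in E) && ((y, k) \in E)) (d_ge0 k)).
Qed.

Lemma child_sum_le E d B x y :
  (forall k, 0 <= d k <= B) -> child_sum E d x y <= n%:R * B.
Proof.
move=> d_bnd; rewrite mulr_natl -[n in B *+ n]card_ord -sumr_const.
apply: ler_sum => k _; have /andP[d_ge0 d_le] := d_bnd k; rewrite /adj -natrM mulnb.
have /andP[_ le_d] := bool_mul_bnd (((x, k) \in E) && ((y, k) \in E)) d_ge0.
exact: le_trans le_d d_le.
Qed.

(* The constants are tuned to the two uses below: d <= 3 with |lam| <= t, and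
   d <= 4 with |lam| <= 6 t, both have B c^2 <= 144. *)
Lemma small_quad_term E d (B c lam t : R) x y :
  (forall k, 0 <= d k <= B) -> 0 <= B -> `|lam| <= c * t -> 0 <= t ->
  n%:R * t <= 10000^-1 -> B * c ^+ 2 <= 144 ->
  0 <= lam ^+ 2 * child_sum E d x y <= t / 64.
Proof.
move=> d_bnd B_ge0 lam_le t_ge0 nt_small Bc_le.
have s_ge0 : 0 <= child_sum E d x y.
  by apply: child_sum_ge0 => k; case/andP: (d_bnd k).
have s_le := child_sum_le E x y d_bnd.
have lam2_le : lam ^+ 2 <= (c * t) ^+ 2.
  by rewrite -real_normK ?num_real // lerXn2r ?nnegrE // (le_trans _ lam_le).
rewrite mulr_ge0 ?sqr_ge0 //=; apply: le_trans (ler_pM _ _ lam2_le s_le) _ => //.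
  exact: sqr_ge0.
have -> : (c * t) ^+ 2 * (n%:R * B) = (B * c ^+ 2) * (n%:R * t) * t by ring.
have Bcnt_le : B * c ^+ 2 * (n%:R * t) <= 144 * 10000^-1.
  by apply: ler_pM => //; rewrite mulr_ge0 ?sqr_ge0.
by apply: le_trans (ler_wpM2r t_ge0 Bcnt_le) _; lra.
Qed.

Lemma adj_weight_bnd E (w : 'I_n -> R) (B : R) x y :
  (forall k, 0 <= w k <= B) -> 0 <= adj E x y * w y + adj E y x * w x <= B + B.
Proof.
move=> w_bnd; have /andP[wy_ge0 wy_le] := w_bnd y; have /andP[wx_ge0 wx_le] := w_bnd x.
have /andP[a_ge0 a_le] := bool_mul_bnd ((x, y) \in E) wy_ge0.
have /andP[b_ge0 b_le] := bool_mul_bnd ((y, x) \in E) wx_ge0.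
by rewrite /adj addr_ge0 //= lerD // ?(le_trans a_le) ?(le_trans b_le).
Qed.

End Precision.

Arguments adj {R n} E x y.

Lemma perturbed_double_close (R : realFieldType) (t mu u D S S' e1 e2 : R) :
  0 < t <= 1 -> `|mu| <= 6 * t -> `|u - 1| <= t / 64 -> `|S' - S| <= t / 32 ->
  `|S| <= 6 -> `|e1| <= t / 64 -> `|e2| <= t / 64 ->
  2 * t = mu * u + e1 -> t * D = mu * S' + e2 -> `|D - 2 * S| < 1.
Proof.
move=> /andP[t_gt0 t_le1] mu_le u_near S'_near S_le e1_le e2_le eq1 eq2.
have expand : t * (D - 2 * S) = mu * ((S' - S) - (u - 1) * S) + (e2 - e1 * S).
  have -> : t * (D - 2 * S) = t * D - (2 * t) * S by ring.
  by rewrite eq1 eq2; ring.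
have lin_le : `|(S' - S) - (u - 1) * S| <= t / 32 + t / 64 * 6.
  by apply: le_trans (ler_normB _ _) _; rewrite lerD // normrM ler_pM.
have err_le : `|e2 - e1 * S| <= t / 64 + t / 64 * 6.
  by apply: le_trans (ler_normB _ _) _; rewrite lerD // normrM ler_pM.
have mu_term_le : `|mu * ((S' - S) - (u - 1) * S)| <= 6 * t * (t / 32 + t / 64 * 6).
  by rewrite normrM ler_pM.
have : `|t * (D - 2 * S)| <= 6 * t * (t / 32 + t / 64 * 6) + (t / 64 + t / 64 * 6).
  by rewrite expand; apply: le_trans (ler_normD _ _) (lerD mu_term_le err_le).
rewrite normrM gtr0_norm //; nra.
Qed.

Section PrecisionMatch.
Variables (R : realType) (n : nat) (G H : {set 'I_n * 'I_n}).
Variables (d d' : 'I_n -> R) (t mu : R).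
Hypotheses (dagG : is_dag G) (dagH : is_dag H).
Hypotheses (d_bnd : forall x, 1 <= d x <= 3) (d'_gt0 : forall x, 0 < d' x).
Hypotheses (t_gt0 : 0 < t) (nt_small : n%:R * t <= 10000^-1).
Hypothesis prec_eq : forall x y, prec_entry G d t x y = prec_entry H d' mu x y.

Lemma t_small (x : 'I_n) : t <= 10000^-1.
Proof.
apply: le_trans nt_small; rewrite ler_pMl // ler1n.
exact: leq_ltn_trans (leq0n x) (ltn_ord x).
Qed.

Lemma d_ge0_le3 x : 0 <= d x <= 3.
Proof. by have /andP[d_ge1 ->] := d_bnd x; rewrite (le_trans ler01). Qed.

Lemma quad_G_small x y : 0 <= t ^+ 2 * child_sum G d x y <= t / 64.
Proof.
apply: (@small_quad_term _ _ _ _ 3 1) => //; last by rewrite expr1n mulr1; lra.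
- exact: d_ge0_le3.
- by rewrite mul1r gtr0_norm.
- exact: ltW.
Qed.

Lemma prec_diag_eq x :
  d x + t ^+ 2 * child_sum G d x x = d' x + mu ^+ 2 * child_sum H d' x x.
Proof. by have := prec_eq x x; rewrite !prec_entry_diag ?dag_irrefl. Qed.

Lemma prec_offdiag_eq x y : x != y ->
  t * (adj G x y * d y + adj G y x * d x) =
  mu * (adj H x y * d' y + adj H y x * d' x)
  + (t ^+ 2 * child_sum G d x y - mu ^+ 2 * child_sum H d' x y).
Proof. by move=> x_neq_y; have := prec_eq x y; rewrite !prec_entry_offdiag //; lra. Qed.

Lemma abs_mu_le p b : (p, b) \in H -> (forall c, (b, c) \notin H) -> `|mu| <= 6 * t.
Proof.
move=> pb b_sink.
have d'b_ge1 : 1 <= d' b.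
  have := prec_diag_eq b; rewrite (child_sum_sink _ _ b_sink) mulr0 addr0 => <-.
  have /andP[d_ge1 _] := d_bnd b; have /andP[q_ge0 _] := quad_G_small b b; lra.
have p_neq_b : p != b by apply: contraTneq pb => ->; apply: dag_irrefl.
have := prec_offdiag_eq p_neq_b.
rewrite (child_sum_sink _ _ b_sink) /adj pb (negbTE (b_sink p)) mul0r mul1r addr0 mulr0 subr0.
have /andP[S_ge0 S_le] := adj_weight_bnd G p b d_ge0_le3.
have /andP[q_ge0 q_le] := quad_G_small p b.
move: (adj G p b * d b + _) S_ge0 S_le => S S_ge0 S_le eq_mu.
have : `|mu * d' b| <= 6 * t.
  rewrite ler_norml; have := t_gt0; nra.
apply: le_trans; rewrite normrM (gtr0_norm (d'_gt0 b)) ler_peMr //.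
Qed.

Lemma d'_le4 x : d' x <= 4.
Proof.
have := prec_diag_eq x; have /andP[_ d_le3] := d_bnd x.
have /andP[_ q_le] := quad_G_small x x; have := t_small x.
have : 0 <= mu ^+ 2 * child_sum H d' x x.
  by rewrite mulr_ge0 ?sqr_ge0 ?child_sum_ge0 // => k; apply: ltW.
lra.
Qed.

Lemma quad_err x y : `|mu| <= 6 * t ->
  `|t ^+ 2 * child_sum G d x y - mu ^+ 2 * child_sum H d' x y| <= t / 64.
Proof.
move=> mu_le; have /andP[qG_ge0 qG_le] := quad_G_small x y.
have /andP[qH_ge0 qH_le] : 0 <= mu ^+ 2 * child_sum H d' x y <= t / 64.
  apply: (@small_quad_term _ _ _ _ 4 6) => //; last by rewrite -natrX -natrM ler_nat.
  - by move=> k; rewrite ltW ?d'_le4.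
  - exact: ltW.
by rewrite ler_norml; apply/andP; split; lra.
Qed.

Lemma d'_close x : `|mu| <= 6 * t -> `|d' x - d x| <= t / 64.
Proof.
move=> mu_le.
have -> : d' x - d x = t ^+ 2 * child_sum G d x x - mu ^+ 2 * child_sum H d' x x.
  by have := prec_diag_eq x; lra.
exact: quad_err.
Qed.

Lemma adj_weight_close x y : `|mu| <= 6 * t ->
  `|(adj H x y * d' y + adj H y x * d' x) - (adj H x y * d y + adj H y x * d x)|
  <= t / 32.
Proof.
move=> mu_le.
have -> : (adj H x y * d' y + adj H y x * d' x) - (adj H x y * d y + adj H y x * d x)
    = adj H x y * (d' y - d y) + adj H y x * (d' x - d x) by ring.
apply: le_trans (ler_normD _ _) _.
have := le_trans (norm_bool_mul ((x, y) \in H) _) (d'_close y mu_le).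
have := le_trans (norm_bool_mul ((y, x) \in H) _) (d'_close x mu_le).
by rewrite /adj; lra.
Qed.

Lemma missing_edge_reversed i j : (i, j) \in G -> (i, j) \notin H -> (j, i) \in H.
Proof.
move=> ij ij_notin_H; apply/contraT => ji_notin_H.
have i_neq_j : i != j by apply: contraTneq ij => ->; apply: dag_irrefl.
have := prec_offdiag_eq i_neq_j; rewrite /adj ij (negbTE (dag_asym dagG ij)).
rewrite (negbTE ij_notin_H) (negbTE ji_notin_H) !mul0r !addr0 mul1r mulr0.
have /andP[_ qG_le] := quad_G_small i j.
have : 0 <= mu ^+ 2 * child_sum H d' i j.
  by rewrite mulr_ge0 ?sqr_ge0 ?child_sum_ge0 // => c; apply: ltW.
have /andP[dj_ge1 _] := d_bnd j; have := t_gt0; nra.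
Qed.

Lemma prec_match_edge i j k l :
  (i, j) \in G -> (k, l) \in G -> d i = 1 -> d j = 2 ->
  (forall b1 b2 : bool, 1 <= `|d l - 2 * (b1%:R * d l + b2%:R * d k)|) ->
  (i, j) \in H.
Proof.
move=> ij kl di dj sep; apply/contraT => ij_notin_H.
have ji := missing_edge_reversed ij ij_notin_H.
have [p [b [pb b_sink]]] := dag_edge_into_sink dagH ji.
have mu_le := abs_mu_le pb b_sink.
have i_neq_j : i != j by apply: contraTneq ij => ->; apply: dag_irrefl.
have k_neq_l : k != l by apply: contraTneq kl => ->; apply: dag_irrefl.
have := prec_offdiag_eq i_neq_j.
rewrite /adj ij ji (negbTE (dag_asym dagG ij)) (negbTE ij_notin_H) dj.
rewrite !mul0r add0r addr0 !mul1r mulrC => eq_ij.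
have := prec_offdiag_eq k_neq_l.
rewrite {1 2}/adj kl (negbTE (dag_asym dagG kl)) mul1r mul0r addr0 => eq_kl.
have S_le : `|adj H k l * d l + adj H l k * d k| <= 6.
  have /andP[S_ge0 S_le] := adj_weight_bnd H k l d_ge0_le3.
  by rewrite ger0_norm //; lra.
have t_le1 : 0 < t <= 1 by rewrite t_gt0 (le_trans (t_small i)) // invf_le1 // ler1n.
have u_close : `|d' i - 1| <= t / 64 by have := d'_close i mu_le; rewrite di.
have := perturbed_double_close t_le1 mu_le u_close (adj_weight_close k l mu_le) S_le
  (quad_err i j mu_le) (quad_err k l mu_le) eq_ij eq_kl.
by rewrite ltNge sep.
Qed.

End PrecisionMatch.

Definition sep_weight (R : numDomainType) n (i j x : 'I_n) : R :=
  if x == i then 1 else if x == j then 2 else 3.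

Lemma sep_weight_bnd (R : realDomainType) n (i j x : 'I_n) :
  1 <= sep_weight R i j x <= 3.
Proof. by rewrite /sep_weight; case: eqP => _; [|case: eqP => _]; apply/andP; split; lra. Qed.

Lemma sep_weight_sep (R : realDomainType) n (i j k l : 'I_n) (b1 b2 : bool) :
  (k, l) != (i, j) ->
  1 <= `|sep_weight R i j l - 2 * (b1%:R * sep_weight R i j l + b2%:R * sep_weight R i j k)|.
Proof.
move=> kl_neq_ij; rewrite /sep_weight.
case: b1; case: b2; rewrite ?mul1r ?mul0r ?addr0 ?add0r;
case: (l =P i) => [li|_]; case: (l =P j) => [lj|_]; case: (k =P i) => [ki|_];
  case: (k =P j) => _; rewrite ?normrN; try (rewrite ler_normr; apply/orP;
  first [by left; lra | by right; lra]).
all: by move: kl_neq_ij; rewrite ki lj eqxx.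
Qed.

Lemma Lambda_one_supp (R : realType) n (E : {set 'I_n * 'I_n}) (lam : R) i j :
  (i, j) \notin E -> Lambda_one E lam i j = 0.
Proof. by move=> /negbTE ij_notin; rewrite mxE ij_notin. Qed.

Lemma cov_of_eq_prec_entry (R : realType) n (G H : {set 'I_n * 'I_n})
    (w w' : 'rV[R]_n) (t mu : R) :
  is_dag G -> is_dag H -> (forall i, w 0 i != 0) -> (forall i, w' 0 i != 0) ->
  cov_of (Lambda_one G t) w = cov_of (Lambda_one H mu) w' ->
  forall x y, prec_entry G (map_mx GRing.inv w 0) t x y =
              prec_entry H (map_mx GRing.inv w' 0) mu x y.
Proof.
move=> dagG dagH w_neq0 w'_neq0 eq_cov x y.
rewrite -!prec_mxE; congr (_ _ x y); apply: prec_mx_cov_of_eq eq_cov => //.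
  exact/(dag_unitmx dagG)/Lambda_one_supp.
exact/(dag_unitmx dagH)/Lambda_one_supp.
Qed.

Lemma model_one_color_subset (R : realType) n (G H : {set 'I_n * 'I_n}) :
  is_dag G -> is_dag H -> (2 <= #|G|)%N ->
  (forall S : 'M[R]_n, model_one_color G S -> model_one_color H S) ->
  G \subset H.
Proof.
move=> dagG dagH G_ge2 GH; apply/subsetP => -[i j] ij.
have [[k l]] : exists e, e \in G :\ (i, j).
  by apply/card_gt0P; move: G_ge2; rewrite (cardsD1 (i, j)) ij.
rewrite !inE => /andP[kl_neq_ij kl].
pose w : 'rV[R]_n := \row_x (sep_weight R i j x)^-1.
have dE x : map_mx GRing.inv w 0 x = sep_weight R i j x by rewrite !mxE invrK.
have w_gt0 x : 0 < w 0 x.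
  by rewrite mxE invr_gt0; case/andP: (sep_weight_bnd R i j x) => w_ge1 _; lra.
pose t : R := (10000 * n%:R)^-1.
have n_gt0 : (0 < n)%N by apply: leq_ltn_trans (leq0n i) (ltn_ord i).
have t_gt0 : 0 < t by rewrite invr_gt0 mulr_gt0 // ltr0n.
have nt_small : n%:R * t <= 10000^-1.
  by rewrite /t invfM mulrCA divff ?mulr1 // pnatr_eq0 -lt0n.
have [w' [mu [w'_gt0 eq_cov]]] : model_one_color H (cov_of (Lambda_one G t) w).
  by apply: GH; exists w, t.
have prec_eq := cov_of_eq_prec_entry dagG dagH (fun x => lt0r_neq0 (w_gt0 x))
  (fun x => lt0r_neq0 (w'_gt0 x)) eq_cov.
apply: (prec_match_edge dagG dagH _ _ t_gt0 nt_small prec_eq ij kl).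
- by move=> x; rewrite dE sep_weight_bnd.
- by move=> x; rewrite !mxE invr_gt0.
- by rewrite dE /sep_weight eqxx.
- have i_neq_j : i != j by apply: contraTneq ij => ->; apply: dag_irrefl.
  by rewrite dE /sep_weight eq_sym (negbTE i_neq_j) eqxx.
- by move=> b1 b2; rewrite !dE sep_weight_sep.
Qed.

Theorem theorem5p8 (R : realType) (n : nat) (G H : {set 'I_n * 'I_n}) :
  is_dag G -> (2 <= #|G|)%N -> is_dag H ->
  (forall S : 'M[R]_n, model_one_color H S <-> model_one_color G S) ->
  H = G.
Proof.
move=> dagG G_ge2 dagH same_model.
have GH : G \subset H by apply: model_one_color_subset => // S /same_model.
have H_ge2 : (2 <= #|H|)%N := leq_trans G_ge2 (subset_leq_card GH).
have HG : H \subset G by apply: model_one_color_subset => // S /same_model.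
by apply/eqP; rewrite eqEsubset HG GH.
Qed.
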